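(* Let $(\varGamma,C)$ be a split-step SUSYQW with coin $C(x)=C(\mathrm R)$ for $x\ge1$ and $C(x)=C(\mathrm L)$ for $x\le0$, where $C(\mathrm L),C(\mathrm R)$ are nontrivial and $b(\mathrm L)\ne0\ne b(\mathrm R)$ (Type III). Let $\Phi_\pm:\mathbb Z\to\mathbb C^2$ satisfy $\Phi_\pm(x+1)=A_\pm(x)\Phi_\pm(x)$ for all $x\in\mathbb Z$, and put $(k_{\pm,1},k_{\pm,2})^{\mathrm T}:=P_\pm(\mathrm L)^{-1}\Phi_\pm(0)$. Then $\sum_{x\in\mathbb Z}\|\Phi_\pm(x)\|^2<\infty$ if and only if for each $j=1,2$, \[ |k_{\pm,j}|^2\sum_{x\in\mathbb N}\Big(|z_{\pm,j}(\mathrm L)|^{-2x}+|z_{\pm,j}(\mathrm R)|^{2x}\Big)<\infty. \] Moreover: $|z_{+,1}(\mathrm L)|^{-1}<1$ and $|z_{+,1}(\mathrm R)|<1$ iff $a(\mathrm L)<-p<a(\mathrm R)$; $|z_{+,2}(\mathrm L)|^{-1}<1$ and $|z_{+,2}(\mathrm R)|<1$ iff $a(\mathrm R)<p<a(\mathrm L)$; $|z_{-,1}(\mathrm L)|^{-1}<1$ and $|z_{-,1}(\mathrm R)|<1$ iff $a(\mathrm R)<-p<a(\mathrm L)$; $|z_{-,2}(\mathrm L)|^{-1}<1$ and $|z_{-,2}(\mathrm R)|<1$ iff $a(\mathrm L)<p<a(\mathrm R)$. Finally, $\dim\ker Q_{\epsilon_\pm}\le1$.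
   Context: Let $L$ be the left shift $(L\Psi)(x)=\Psi(x+1)$ on $\ell^2(\mathbb Z)$. A split-step SUSYQW is $\varGamma=\begin{pmatrix} p & qL\\ \overline{q}L^* & -p\end{pmatrix}$, $C=\begin{pmatrix} a_1 & \overline{b}\\ b & a_2\end{pmatrix}$ on $\ell^2(\mathbb Z)\oplus\ell^2(\mathbb Z)$ with $p\in\mathbb R$, $q\in\mathbb C\setminus\{0\}$, $p^2+|q|^2=1$, $\theta=\operatorname{Arg}q$, real sequences $a_1,a_2$ and complex sequence $b$ with $a_j(x)^2+|b(x)|^2=1$, $b(x)(a_1(x)+a_2(x))=0$. $C(x)=\begin{pmatrix} a_1(x)&\overline{b(x)}\\ b(x)&a_2(x)\end{pmatrix}$; a nontrivial (i.e. $\ne\pm I$) limit $C(\sharp)$ has $a_1(\sharp)=-a_2(\sharp)=:a(\sharp)$, $a(\sharp)^2+|b(\sharp)|^2=1$. Define $\alpha_\pm(x)=(1\pm p)e^{i\theta}b(x)$, $\beta(x)=|q|(a_2(x+1)-a_1(x))$, and $A_\pm(x)=\begin{pmatrix}\mp\beta(x)/\alpha_\pm(x+1)&\overline{\alpha_\mp(x)}/\alpha_\pm(x+1)\\1&0\end{pmatrix}$. For $\sharp\in\{\mathrm L,\mathrm R\}$: $z_{\pm,j}(\sharp)=\frac{\overline q}{1\pm p}\cdot\frac{(-1)^j\pm a(\sharp)}{b(\sharp)}$ ($j=1,2$) and $P_\pm(\sharp)=\begin{pmatrix}z_{\pm,1}(\sharp)&z_{\pm,2}(\sharp)\\1&1\end{pmatrix}$.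 $Q_{\epsilon_\pm}$ are the operators on $\ell^2(\mathbb Z)$ given by $-2iQ_{\epsilon_\pm}=(1\pm p)e^{i\theta}Lb-(1\mp p)e^{-i\theta}\overline{b}L^*\pm|q|(a_2(\cdot+1)-a_1)$. $\mathbb N=\{1,2,\dots\}$; an open interval $(s,t)$ with $s\ge t$ is empty. *)

From Stdlib Require Import Reals ZArith Lra Lia.
Open Scope R_scope.

Record Cx := mkC { Re : R; Im : R }.

Definition RtoC (r : R) : Cx := mkC r 0.
Definition C0 : Cx := RtoC 0.
Definition C1 : Cx := RtoC 1.
Definition Ci : Cx := mkC 0 1.
Definition Cadd (z w : Cx) : Cx := mkC (Re z + Re w) (Im z + Im w).
Definition Copp (z : Cx) : Cx := mkC (- Re z) (- Im z).
Definition Csub (z w : Cx) : Cx := Cadd z (Copp w).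
Definition Cmul (z w : Cx) : Cx :=
  mkC (Re z * Re w - Im z * Im w) (Re z * Im w + Im z * Re w).
Definition Cconj (z : Cx) : Cx := mkC (Re z) (- Im z).
Definition Cnorm2 (z : Cx) : R := Re z * Re z + Im z * Im z.
Definition Cabs (z : Cx) : R := sqrt (Cnorm2 z).
Definition Cinv (z : Cx) : Cx := mkC (Re z / Cnorm2 z) (- Im z / Cnorm2 z).
Definition Cdiv (z w : Cx) : Cx := Cmul z (Cinv w).
Definition Cscale (r : R) (z : Cx) : Cx := mkC (r * Re z) (r * Im z).

(* e^{i Arg q} for q <> 0, i.e. q / |q| *)
Definition expiArg (q : Cx) : Cx := Cscale (/ Cabs q) q.

Record M2 := mkM2 { m11 : Cx; m12 : Cx; m21 : Cx; m22 : Cx }.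
Definition C2 := (Cx * Cx)%type.
Definition M2app (M : M2) (v : C2) : C2 :=
  (Cadd (Cmul (m11 M) (fst v)) (Cmul (m12 M) (snd v)),
   Cadd (Cmul (m21 M) (fst v)) (Cmul (m22 M) (snd v))).
Definition M2det (M : M2) : Cx := Csub (Cmul (m11 M) (m22 M)) (Cmul (m12 M) (m21 M)).
Definition M2inv (M : M2) : M2 :=
  let d := M2det M in
  mkM2 (Cdiv (m22 M) d) (Cdiv (Copp (m12 M)) d)
       (Cdiv (Copp (m21 M)) d) (Cdiv (m11 M) d).

(* sum_{x in Z} f x < oo, for nonnegative f: symmetric partial sums are bounded *)
Definition summable_Z (f : Z -> R) : Prop :=
  exists M : R, forall n : nat,
    sum_f_R0 (fun m => f (Z.of_nat m - Z.of_nat n)%Z) (2 * n) <= M.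
(* sum_{x in N = {1,2,...}} g x < oo, for nonnegative g: partial sums bounded *)
Definition summable_N (g : nat -> R) : Prop :=
  exists M : R, forall n : nat, sum_f_R0 (fun m => g (S m)) n <= M.

Definition C2norm2 (v : C2) : R := Cnorm2 (fst v) + Cnorm2 (snd v).

(* signs: sg = true stands for "+", sg = false for "-" *)
Definition sgn (sg : bool) : R := if sg then 1 else -1.

Definition alpha (p : R) (q : Cx) (b : Z -> Cx) (sg : bool) (x : Z) : Cx :=
  Cmul (Cscale (1 + sgn sg * p) (expiArg q)) (b x).

Definition beta (q : Cx) (a1 a2 : Z -> R) (x : Z) : R :=
  Cabs q * (a2 (x + 1)%Z - a1 x).

Definition Amat (p : R) (q : Cx) (a1 a2 : Z -> R) (b : Z -> Cx) (sg : bool) (x : Z) : M2 :=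
  let den := alpha p q b sg (x + 1)%Z in
  mkM2 (Cdiv (RtoC (- sgn sg * beta q a1 a2 x)) den)
       (Cdiv (Cconj (alpha p q b (negb sg) x)) den)
       C1 C0.

(* z_{+-,j}(#) = conj(q)/(1 +- p) * ((-1)^j +- a(#)) / b(#),  for a side # with
   limit coin data a(#), b(#) *)
Definition zz (p : R) (q : Cx) (sg : bool) (j : nat) (a : R) (bs : Cx) : Cx :=
  Cmul (Cscale (/ (1 + sgn sg * p)) (Cconj q))
       (Cdiv (RtoC ((-1) ^ j + sgn sg * a)) bs).

Definition Pmat (p : R) (q : Cx) (sg : bool) (a : R) (bs : Cx) : M2 :=
  mkM2 (zz p q sg 1 a bs) (zz p q sg 2 a bs) C1 C1.

Definition C2comp (j : nat) (v : C2) : Cx := if Nat.eqb j 1 then fst v else snd v.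

(* -2i Q_{eps_{+-}} psi, as an operator on sequences Z -> Cx:
   (1+-p) e^{i theta} (L b psi)(x) - (1-+p) e^{-i theta} conj(b(x)) (L^* psi)(x)
   +- |q| (a2(x+1) - a1(x)) psi(x),
   with (L psi)(x) = psi(x+1), (L^* psi)(x) = psi(x-1). *)
Definition m2iQ (p : R) (q : Cx) (a1 a2 : Z -> R) (b : Z -> Cx) (sg : bool)
  (psi : Z -> Cx) (x : Z) : Cx :=
  Cadd (Csub (Cmul (Cscale (1 + sgn sg * p) (expiArg q)) (Cmul (b (x + 1)%Z) (psi (x + 1)%Z)))
             (Cmul (Cscale (1 - sgn sg * p) (Cconj (expiArg q))) (Cmul (Cconj (b x)) (psi (x - 1)%Z))))
       (Cscale (sgn sg * Cabs q * (a2 (x + 1)%Z - a1 x)) (psi x)).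

Definition Qeps (p : R) (q : Cx) (a1 a2 : Z -> R) (b : Z -> Cx) (sg : bool)
  (psi : Z -> Cx) (x : Z) : Cx :=
  Cmul (Cscale (/ 2) Ci) (m2iQ p q a1 a2 b sg psi x).

Definition l2Z (psi : Z -> Cx) : Prop := summable_Z (fun x => Cnorm2 (psi x)).

Definition dim_ker_le1 (Q : (Z -> Cx) -> Z -> Cx) : Prop :=
  forall psi1 psi2 : Z -> Cx,
    l2Z psi1 -> l2Z psi2 ->
    (forall x, Q psi1 x = C0) -> (forall x, Q psi2 x = C0) ->
    exists c1 c2 : Cx, (c1 <> C0 \/ c2 <> C0) /\
      forall x, Cadd (Cmul c1 (psi1 x)) (Cmul c2 (psi2 x)) = C0.

(* On each half-line the coin is constant, and there the transfer matrix acts on the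
   vectors (z_j, 1) by A(x) (z_j(x), 1) = z_j(x) (z_j(x+1), 1).  Writing Phi(0) = P(L) k,
   the solution is therefore k_j z_j(L)^x (z_j(L), 1) summed over j for x <= 0 and
   k_j z_j(L) z_j(R)^(x-1) (z_j(R), 1) for x >= 1; since z_1 <> z_2 it is square
   summable iff each of the four geometric modes is.  The decay windows come from
   |z_j|^2 - 1 = c sgn (-1)^j (a - (-1)^j p) with c > 0.  For the kernel of Q,
   Q psi = 0 is a three-term recurrence, and for two solutions the Casoratian W satisfies
   |b(x+1)|^2 |W(x)|^2 = rho |b(x)|^2 |W(x-1)|^2 with a constant rho > 0; a summable
   geometric sequence vanishes, so W = 0 and the two solutions are proportional. *)

From Stdlib Require Import Reals ZArith Lra Lia Field.
Open Scope R_scope.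

Lemma inv_lt1_iff s : 0 < s -> (/ s < 1 <-> 1 < s).
Proof.
  intro Hs; split; intro H1.
  - apply (Rmult_lt_compat_l s) in H1; [| exact Hs].
    rewrite Rinv_r, Rmult_1_r in H1 by lra; exact H1.
  - rewrite <- Rinv_1; apply Rinv_lt_contravar; lra.
Qed.

Lemma sqrt_gt1_iff r : 0 <= r -> (1 < sqrt r <-> 1 < r).
Proof.
  intro Hr; rewrite <- sqrt_1 at 1; split; [apply sqrt_lt_0_alt |].
  intro; apply sqrt_lt_1; lra.
Qed.

Lemma sqrt_lt1_iff r : 0 <= r -> (sqrt r < 1 <-> r < 1).
Proof.
  intro Hr; rewrite <- sqrt_1 at 1; split; [apply sqrt_lt_0_alt |].
  intro; apply sqrt_lt_1; lra.
Qed.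

Lemma sgn_sq sg : sgn sg * sgn sg = 1.
Proof. destruct sg; simpl; ring. Qed.

Lemma sgn_negb sg : sgn (negb sg) = - sgn sg.
Proof. destruct sg; simpl; ring. Qed.

Lemma pow_m1_cases j : (-1) ^ j = 1 \/ (-1) ^ j = -1.
Proof.
  induction j as [| j [E | E]]; simpl; [now left | right | left]; rewrite E; ring.
Qed.

Lemma pow_m1_sq j : (-1) ^ j * (-1) ^ j = 1.
Proof. destruct (pow_m1_cases j) as [-> | ->]; ring. Qed.

Lemma forall_1_2 (P : nat -> Prop) :
  (forall j : nat, (j = 1 \/ j = 2)%nat -> P j) <-> P 1%nat /\ P 2%nat.
Proof. split; [auto | intros [H1 H2] j [-> | ->]; assumption]. Qed.

(** * Complex numbers *)

Lemma Cx_ext (z w : Cx) : Re z = Re w -> Im z = Im w -> z = w.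
Proof. destruct z, w; simpl; intros -> ->; reflexivity. Qed.

Lemma Cx_ring : ring_theory C0 C1 Cadd Cmul Csub Copp (@eq Cx).
Proof.
  constructor; intros; repeat match goal with z : Cx |- _ => destruct z end;
    apply Cx_ext; simpl; ring.
Qed.

Lemma Cnorm2_ge0 z : 0 <= Cnorm2 z.
Proof. unfold Cnorm2; nra. Qed.

Lemma Cnorm2_gt0 z : 0 < Cnorm2 z <-> z <> C0.
Proof.
  destruct z as [x y]; unfold Cnorm2; simpl; split.
  - intros H E; injection E; intros -> ->; lra.
  - intro H; destruct (Req_dec x 0) as [-> | ]; [destruct (Req_dec y 0) as [-> | ]|];
      [now contradict H | nra | nra].
Qed.

Lemma C1_neq_C0 : C1 <> C0.
Proof. intro E; injection E; lra. Qed.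

Lemma Cx_field : field_theory C0 C1 Cadd Cmul Csub Copp Cdiv Cinv (@eq Cx).
Proof.
  constructor; [exact Cx_ring | exact C1_neq_C0 | reflexivity |].
  intros [x y] Hz; apply Cnorm2_gt0 in Hz; unfold Cnorm2 in Hz; simpl in Hz.
  apply Cx_ext; unfold Cinv, Cmul, C1, RtoC, Cnorm2; simpl; field; lra.
Qed.

Add Field Cx_field : Cx_field.

Lemma Cx_eq0_dec z : z = C0 \/ z <> C0.
Proof.
  destruct (Rlt_dec 0 (Cnorm2 z)) as [h | h]; [right; now apply Cnorm2_gt0 |].
  left; destruct z as [x y]; unfold Cnorm2 in h; simpl in h.
  apply Cx_ext; simpl; nra.
Qed.

Lemma Cnorm2_eq0_iff z : Cnorm2 z = 0 <-> z = C0.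
Proof.
  split; [| intros ->; unfold Cnorm2; simpl; ring].
  intro E; destruct (Cx_eq0_dec z) as [H | H]; [exact H |].
  apply Cnorm2_gt0 in H; lra.
Qed.

Lemma RtoC_add r s : RtoC (r + s) = Cadd (RtoC r) (RtoC s).
Proof. apply Cx_ext; simpl; ring. Qed.

Lemma RtoC_mul r s : RtoC (r * s) = Cmul (RtoC r) (RtoC s).
Proof. apply Cx_ext; simpl; ring. Qed.

Lemma RtoC_inv r : r <> 0 -> RtoC (/ r) = Cinv (RtoC r).
Proof. intro Hr; apply Cx_ext; unfold Cinv, Cnorm2; simpl; field; exact Hr. Qed.

Lemma RtoC_neq0 r : r <> 0 -> RtoC r <> C0.
Proof. intros Hr E; injection E; exact Hr. Qed.

Lemma Cscale_RtoC r z : Cscale r z = Cmul (RtoC r) z.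
Proof. apply Cx_ext; simpl; ring. Qed.

Lemma Cconj_mul z w : Cconj (Cmul z w) = Cmul (Cconj z) (Cconj w).
Proof. apply Cx_ext; simpl; ring. Qed.

Lemma Cconj_Cscale r z : Cconj (Cscale r z) = Cscale r (Cconj z).
Proof. apply Cx_ext; simpl; ring. Qed.

Lemma Cmul_Cconj z : Cmul z (Cconj z) = RtoC (Cnorm2 z).
Proof. apply Cx_ext; unfold Cnorm2; simpl; ring. Qed.

Lemma Cconj_eq_div z : z <> C0 -> Cconj z = Cdiv (RtoC (Cnorm2 z)) z.
Proof. intro Hz; rewrite <- Cmul_Cconj; field; exact Hz. Qed.

Lemma Cnorm2_mul z w : Cnorm2 (Cmul z w) = Cnorm2 z * Cnorm2 w.
Proof. unfold Cnorm2; simpl; ring. Qed.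

Lemma Cnorm2_RtoC r : Cnorm2 (RtoC r) = r * r.
Proof. unfold Cnorm2; simpl; ring. Qed.

Lemma Cnorm2_conj z : Cnorm2 (Cconj z) = Cnorm2 z.
Proof. unfold Cnorm2; simpl; ring. Qed.

Lemma Cnorm2_opp z : Cnorm2 (Copp z) = Cnorm2 z.
Proof. unfold Cnorm2; simpl; ring. Qed.

Lemma Cnorm2_scale r z : Cnorm2 (Cscale r z) = r * r * Cnorm2 z.
Proof. unfold Cnorm2; simpl; ring. Qed.

Lemma Cconj_neq0 z : z <> C0 -> Cconj z <> C0.
Proof. rewrite <- !Cnorm2_gt0, Cnorm2_conj; exact (fun H => H). Qed.

Lemma Cnorm2_inv z : z <> C0 -> Cnorm2 (Cinv z) = / Cnorm2 z.
Proof.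
  intro Hz; apply Cnorm2_gt0 in Hz; destruct z as [x y].
  unfold Cinv, Cnorm2 in *; simpl in *; field; lra.
Qed.

Lemma Cnorm2_div z w : w <> C0 -> Cnorm2 (Cdiv z w) = Cnorm2 z / Cnorm2 w.
Proof. intro Hw; unfold Cdiv; rewrite Cnorm2_mul, Cnorm2_inv by exact Hw; reflexivity. Qed.

Lemma Cnorm2_add_le z w : Cnorm2 (Cadd z w) <= 2 * Cnorm2 z + 2 * Cnorm2 w.
Proof.
  destruct z as [x y], w as [u v]; unfold Cnorm2; simpl.
  pose proof (pow2_ge_0 (x - u)); pose proof (pow2_ge_0 (y - v)); nra.
Qed.

Lemma Cnorm2_sub_le z w : Cnorm2 (Csub z w) <= 2 * Cnorm2 z + 2 * Cnorm2 w.
Proof.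
  unfold Csub; rewrite <- (Cnorm2_opp w); apply Cnorm2_add_le.
Qed.

Lemma Cmul_eq0_r z w : z <> C0 -> Cmul z w = C0 -> w = C0.
Proof.
  intros Hz E; replace w with (Cmul (Cinv z) (Cmul z w)) by (field; exact Hz).
  rewrite E; ring.
Qed.

Lemma Cmul_eq0_iff_l z w : w <> C0 -> Cmul z w = C0 <-> z = C0.
Proof.
  intro Hw; split; [| intros ->; ring].
  intro E; apply (Cmul_eq0_r w); [exact Hw | rewrite <- E; ring].
Qed.

Lemma Csub_neq0 z w : z <> w -> Csub z w <> C0.
Proof. intros Hzw E; apply Hzw; replace z with (Cadd (Csub z w) w) by ring; rewrite E; ring. Qed.

Lemma Copp_neq0 z : z <> C0 -> Copp z <> C0.
Proof. intros Hz E; apply Hz; replace z with (Copp (Copp z)) by ring; rewrite E; ring. Qed.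

Lemma Copp_eq0 z : Copp z = C0 -> z = C0.
Proof. intro E; replace z with (Copp (Copp z)) by ring; rewrite E; ring. Qed.

Lemma Csub_eq0_eq z w : Csub z w = C0 -> z = w.
Proof. intro E; replace z with (Cadd (Csub z w) w) by ring; rewrite E; ring. Qed.

Fixpoint Cpow (z : Cx) (n : nat) : Cx :=
  match n with O => C1 | S n => Cmul (Cpow z n) z end.

Lemma Cnorm2_pow z n : Cnorm2 (Cpow z n) = Cnorm2 z ^ n.
Proof.
  induction n as [| n IH]; simpl; [unfold Cnorm2; simpl; ring |].
  rewrite Cnorm2_mul, IH; ring.
Qed.

Lemma Cabs_sq z : Cabs z * Cabs z = Cnorm2 z.
Proof. apply sqrt_sqrt, Cnorm2_ge0. Qed.

Lemma Cabs_gt0 z : z <> C0 -> 0 < Cabs z.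
Proof. intro Hz; apply sqrt_lt_R0, Cnorm2_gt0, Hz. Qed.

Lemma Cnorm2_expiArg q : q <> C0 -> Cnorm2 (expiArg q) = 1.
Proof.
  intro Hq; pose proof (Cabs_gt0 q Hq); unfold expiArg.
  rewrite Cnorm2_scale, <- Cabs_sq; field; lra.
Qed.

Lemma Cconj_mul_expiArg q : q <> C0 -> Cmul (Cconj q) (expiArg q) = RtoC (Cabs q).
Proof.
  intro Hq; pose proof (Cabs_gt0 q Hq); unfold expiArg.
  rewrite Cscale_RtoC, RtoC_inv by lra.
  replace (Cmul (Cconj q) (Cmul (Cinv (RtoC (Cabs q))) q))
    with (Cdiv (Cmul q (Cconj q)) (RtoC (Cabs q))) by (field; apply RtoC_neq0; lra).
  rewrite Cmul_Cconj, <- Cabs_sq, RtoC_mul; field; apply RtoC_neq0; lra.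
Qed.

Lemma det2_eq0_kernel u1 u2 v1 v2 : Csub (Cmul u1 v2) (Cmul v1 u2) = C0 ->
  exists c1 c2, (c1 <> C0 \/ c2 <> C0) /\
    Cadd (Cmul c1 u1) (Cmul c2 u2) = C0 /\ Cadd (Cmul c1 v1) (Cmul c2 v2) = C0.
Proof.
  intro Hdet.
  assert (Hu : Cadd (Cmul u2 v1) (Cmul (Copp u1) v2) = C0)
    by (transitivity (Copp (Csub (Cmul u1 v2) (Cmul v1 u2))); [ring | rewrite Hdet; ring]).
  destruct (Cx_eq0_dec u1) as [Hu1 | Hu1]; [destruct (Cx_eq0_dec u2) as [Hu2 | Hu2] |].
  - destruct (Cx_eq0_dec v1) as [Hv1 | Hv1]; [destruct (Cx_eq0_dec v2) as [Hv2 | Hv2] |].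
    + exists C1, C0; subst; split; [left; exact C1_neq_C0 | split; ring].
    + exists v2, (Copp v1); subst; split; [left; exact Hv2 | split; ring].
    + exists v2, (Copp v1); subst; split; [right; now apply Copp_neq0 | split; ring].
  - exists u2, (Copp u1); split; [left; exact Hu2 | split; [ring | exact Hu]].
  - exists u2, (Copp u1); split; [right; now apply Copp_neq0 | split; [ring | exact Hu]].
Qed.

Lemma M2app_inj_companion M u v :
  m21 M = C1 -> m22 M = C0 -> m12 M <> C0 -> M2app M u = M2app M v -> u = v.
Proof.
  intros H21 H22 H12 E; destruct u as [u1 u2], v as [v1 v2].
  unfold M2app in E; rewrite H21, H22 in E.
  pose proof (f_equal fst E) as E1; pose proof (f_equal snd E) as E2; cbn [fst snd] in E1, E2.
  assert (Hu1 : u1 = v1) by (transitivity (Cadd (Cmul C1 u1) (Cmul C0 u2)); [ring |];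
                              rewrite E2; ring).
  subst v1; f_equal; apply Csub_eq0_eq.
  apply (Cmul_eq0_r (m12 M)); [exact H12 |].
  transitivity (Csub (Cadd (Cmul (m11 M) u1) (Cmul (m12 M) u2))
                     (Cadd (Cmul (m11 M) u1) (Cmul (m12 M) v2))); [ring | rewrite E1; ring].
Qed.

(** * Bounded partial sums *)

Lemma sum_f_R0_scal c f n : sum_f_R0 (fun m => c * f m) n = c * sum_f_R0 f n.
Proof. rewrite scal_sum; apply sum_eq; intros; ring. Qed.

Definition bounded_series (f : nat -> R) : Prop :=
  exists M, forall n, sum_f_R0 f n <= M.

Lemma bounded_series_le f g :
  (forall m, f m <= g m) -> bounded_series g -> bounded_series f.
Proof.
  intros Hfg [M HM]; exists M; intro n.
  apply Rle_trans with (2 := HM n), sum_Rle; intros; apply Hfg.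
Qed.

Lemma bounded_series_ext f g :
  (forall m, f m = g m) -> bounded_series f <-> bounded_series g.
Proof. intro E; split; apply bounded_series_le; intro m; rewrite E; lra. Qed.

Lemma bounded_series_add f g :
  bounded_series f -> bounded_series g -> bounded_series (fun m => f m + g m).
Proof.
  intros [M HM] [N HN]; exists (M + N); intro n.
  rewrite plus_sum; specialize (HM n); specialize (HN n); lra.
Qed.

Lemma bounded_series_scal c f :
  0 <= c -> bounded_series f -> bounded_series (fun m => c * f m).
Proof.
  intros Hc [M HM]; exists (c * M); intro n.
  rewrite sum_f_R0_scal; apply Rmult_le_compat_l; auto.
Qed.

Lemma bounded_series_geometric K t : 0 <= K -> 0 <= t ->
  bounded_series (fun m => K * t ^ m) <-> K = 0 \/ t < 1.
Proof.
  intros HK Ht; split.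
  - intros [M HM]; destruct (Rlt_le_dec t 1) as [lt1 | ge1]; [now right | left].
    destruct HK as [HK | ->]; [exfalso | reflexivity].
    destruct (INR_archimed K M HK) as [n Hn].
    assert (Hsum : sum_f_R0 (fun _ => K) n <= sum_f_R0 (fun m => K * t ^ m) n).
    { apply sum_Rle; intros m _; pose proof (pow_R1_Rle t m ge1); nra. }
    rewrite sum_cte, S_INR in Hsum; specialize (HM n); lra.
  - intros Hcase; exists (K / (1 - t)); intro n.
    destruct Hcase as [-> | lt1].
    + rewrite sum_f_R0_scal; apply Req_le; unfold Rdiv; ring.
    + rewrite sum_f_R0_scal, tech3 by lra; pose proof (pow_le t (S n) Ht).
      unfold Rdiv; apply Rmult_le_compat_l; [exact HK |].
      rewrite <- (Rmult_1_l (/ (1 - t))) at 2.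
      apply Rmult_le_compat_r; [apply Rlt_le, Rinv_0_lt_compat |]; lra.
Qed.

Lemma summable_N_geometric_pair K s t : 0 <= K -> 0 < s -> 0 < t ->
  summable_N (fun x => K * (s ^ x + t ^ x)) <-> (K = 0 \/ s < 1) /\ (K = 0 \/ t < 1).
Proof.
  intros HK Hs Ht.
  assert (Hgeom : forall u, 0 < u ->
    bounded_series (fun m => K * u ^ S m) <-> K = 0 \/ u < 1).
  { intros u Hu; rewrite (bounded_series_ext _ (fun m => K * u * u ^ m))
      by (intro; simpl; ring).
    rewrite bounded_series_geometric by nra.
    split; intros [E | lt1]; auto; left; [nra | subst; ring]. }
  change (bounded_series (fun m => K * (s ^ S m + t ^ S m)) <->
          (K = 0 \/ s < 1) /\ (K = 0 \/ t < 1)).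
  rewrite <- (Hgeom s Hs), <- (Hgeom t Ht).
  pose proof (fun m => pow_le s (S m) (Rlt_le _ _ Hs)) as Hs_pow.
  pose proof (fun m => pow_le t (S m) (Rlt_le _ _ Ht)) as Ht_pow.
  split.
  - intro Hb; split; apply bounded_series_le with (2 := Hb); intro m;
      specialize (Hs_pow m); specialize (Ht_pow m); nra.
  - intros [Hb1 Hb2]; apply (bounded_series_ext _ _ (fun m => eq_sym (Rmult_plus_distr_l _ _ _))).
    apply bounded_series_add; assumption.
Qed.

Lemma sum_f_R0_term_le g i n :
  (forall m, 0 <= g m) -> (i <= n)%nat -> g i <= sum_f_R0 g n.
Proof.
  intros Hg Hin; induction n as [| n IH].
  - replace i with 0%nat by lia; simpl; lra.
  - rewrite tech5; destruct (Nat.eq_dec i (S n)) as [-> |].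
    + pose proof (cond_pos_sum g n Hg); lra.
    + specialize (IH ltac:(lia)); specialize (Hg (S n)); lra.
Qed.

Definition sym_sum (f : Z -> R) (n : nat) : R :=
  sum_f_R0 (fun m => f (Z.of_nat m - Z.of_nat n)%Z) (2 * n).

Lemma sym_sum_S f n :
  sym_sum f (S n) = f (- Z.of_nat (S n))%Z + sym_sum f n + f (Z.of_nat (S n)).
Proof.
  unfold sym_sum; replace (2 * S n)%nat with (S (S (2 * n))) by lia.
  rewrite tech5, decomp_sum by lia; simpl Init.Nat.pred.
  replace (Z.of_nat 0 - Z.of_nat (S n))%Z with (- Z.of_nat (S n))%Z by lia.
  replace (Z.of_nat (S (S (2 * n))) - Z.of_nat (S n))%Z with (Z.of_nat (S n)) by lia.
  rewrite (sum_eq _ (fun m => f (Z.of_nat m - Z.of_nat n)%Z)); [reflexivity |].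
  intros m _; f_equal; lia.
Qed.

Lemma sym_sum_halves f n :
  sym_sum f (S n)
  = sum_f_R0 (fun m => f (- Z.of_nat m)%Z) (S n) + sum_f_R0 (fun m => f (Z.of_nat (S m))) n.
Proof.
  induction n as [| n IH]; rewrite sym_sum_S; [unfold sym_sum; simpl; ring |].
  rewrite IH, (tech5 _ (S n)), (tech5 (fun m => f (Z.of_nat (S m))) n); ring.
Qed.

Lemma summable_Z_halves f : (forall x, 0 <= f x) ->
  summable_Z f <->
  bounded_series (fun m => f (- Z.of_nat m)%Z) /\ bounded_series (fun m => f (Z.of_nat (S m))).
Proof.
  intro Hf; split.
  - intros [M HM]; split; exists M; intro n; specialize (HM (S n)).
    all: change (sym_sum f (S n) <= M) in HM; rewrite sym_sum_halves in HM.
    + pose proof (cond_pos_sum (fun m => f (Z.of_nat (S m))) n (fun m => Hf _)).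
      rewrite tech5 in HM; specialize (Hf (- Z.of_nat (S n))%Z); lra.
    + pose proof (cond_pos_sum (fun m => f (- Z.of_nat m)%Z) (S n) (fun m => Hf _)); lra.
  - intros [[M HM] [N HN]]; exists (M + N); intros [| n].
    + specialize (HM 0%nat); specialize (HN 0%nat); specialize (Hf 1%Z); simpl in *; lra.
    + change (sym_sum f (S n) <= M + N).
      rewrite sym_sum_halves; specialize (HM (S n)); specialize (HN n); lra.
Qed.

Lemma summable_Z_le f g :
  (forall x, f x <= g x) -> summable_Z g -> summable_Z f.
Proof.
  intros Hfg [M HM]; exists M; intro n.
  apply Rle_trans with (2 := HM n), sum_Rle; intros; apply Hfg.
Qed.

Lemma summable_Z_add f g :
  summable_Z f -> summable_Z g -> summable_Z (fun x => f x + g x).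
Proof.
  intros [M HM] [N HN]; exists (M + N); intro n.
  rewrite plus_sum; specialize (HM n); specialize (HN n); lra.
Qed.

Lemma summable_Z_scal c f :
  0 <= c -> summable_Z f -> summable_Z (fun x => c * f x).
Proof.
  intros Hc [M HM]; exists (c * M); intro n.
  rewrite sum_f_R0_scal; apply Rmult_le_compat_l; auto.
Qed.

Lemma summable_Z_bounded f :
  (forall x, 0 <= f x) -> summable_Z f -> exists M, forall x, f x <= M.
Proof.
  intros Hf [M HM]; exists M; intro x.
  set (n := Z.abs_nat x); specialize (HM n).
  refine (Rle_trans _ _ _ _ HM).
  replace x with (Z.of_nat (Z.to_nat (x + Z.of_nat n)) - Z.of_nat n)%Z at 1 by lia.
  apply (sum_f_R0_term_le (fun m => f (Z.of_nat m - Z.of_nat n)%Z)); [intro; apply Hf | lia].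
Qed.

Lemma summable_Z_geometric_eq0 (D : Z -> R) rho : 0 < rho ->
  (forall x, 0 <= D x) -> (forall x, D x = rho * D (x - 1)%Z) ->
  summable_Z D -> D 0%Z = 0.
Proof.
  intros Hrho HD Hstep Hsum; apply summable_Z_halves in Hsum as [Hleft Hright]; [| exact HD].
  pose proof (HD 0%Z) as HD0.
  assert (Hconst : forall u : nat -> Z,
    (forall m, D 0%Z <= D (u m)) -> bounded_series (fun m => D (u m)) -> D 0%Z = 0).
  { intros u Hu Hb.
    assert (Hc : bounded_series (fun m => D 0%Z * 1 ^ m)).
    { apply bounded_series_le with (2 := Hb); intro m; rewrite pow1, Rmult_1_r; apply Hu. }
    apply bounded_series_geometric in Hc as [E | E]; lra. }
  destruct (Rle_lt_dec 1 rho) as [Hge | Hlt].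
  - apply (Hconst (fun m => Z.of_nat (S m))); [| exact Hright].
    assert (Hup : forall n, D 0%Z <= D (Z.of_nat n)).
    { induction n as [| n IH]; [apply Rle_refl |].
      rewrite (Hstep (Z.of_nat (S n))); replace (Z.of_nat (S n) - 1)%Z with (Z.of_nat n) by lia.
      pose proof (HD (Z.of_nat n)); nra. }
    intro m; apply Hup.
  - apply (Hconst (fun m => (- Z.of_nat m)%Z)); [| exact Hleft].
    induction m as [| m IH]; [apply Rle_refl |].
    apply Rle_trans with (1 := IH).
    rewrite (Hstep (- Z.of_nat m)%Z); replace (- Z.of_nat m - 1)%Z with (- Z.of_nat (S m))%Z by lia.
    pose proof (HD (- Z.of_nat (S m))%Z); nra.
Qed.

(** * Two geometric modes *)

(* [c1 (y1, 1) + c2 (y2, 1)], i.e. the paper's matrix [P = (y1 y2; 1 1)] applied to [(c1, c2)]. *)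
Definition comb (y1 y2 c1 c2 : Cx) : C2 :=
  (Cadd (Cmul c1 y1) (Cmul c2 y2), Cadd c1 c2).

Lemma comb_swap y1 y2 c1 c2 : comb y2 y1 c2 c1 = comb y1 y2 c1 c2.
Proof. unfold comb; f_equal; ring. Qed.

(* From [c1 (y1 - y2) = (c1 y1 + c2 y2) - y2 (c1 + c2)]. *)
Lemma Cnorm2_comb_coef_le y1 y2 c1 c2 : y1 <> y2 ->
  Cnorm2 c1 <= (2 + 2 * Cnorm2 y2) / Cnorm2 (Csub y1 y2) * C2norm2 (comb y1 y2 c1 c2).
Proof.
  intro Hy; pose proof (proj2 (Cnorm2_gt0 _) (Csub_neq0 _ _ Hy)) as Hd.
  pose proof (Cnorm2_sub_le (Cadd (Cmul c1 y1) (Cmul c2 y2)) (Cmul y2 (Cadd c1 c2))) as Hle.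
  replace (Csub (Cadd (Cmul c1 y1) (Cmul c2 y2)) (Cmul y2 (Cadd c1 c2)))
    with (Cmul c1 (Csub y1 y2)) in Hle by ring.
  rewrite !Cnorm2_mul in Hle.
  pose proof (Cnorm2_ge0 (Cadd (Cmul c1 y1) (Cmul c2 y2))).
  pose proof (Cnorm2_ge0 (Cadd c1 c2)); pose proof (Cnorm2_ge0 y2).
  apply (Rmult_le_reg_r (Cnorm2 (Csub y1 y2))); [exact Hd |].
  replace ((2 + 2 * Cnorm2 y2) / Cnorm2 (Csub y1 y2) * C2norm2 _ * Cnorm2 (Csub y1 y2))
    with ((2 + 2 * Cnorm2 y2) * C2norm2 (comb y1 y2 c1 c2)) by (field; lra).
  unfold comb, C2norm2; simpl; nra.
Qed.

Lemma C2norm2_comb_le y1 y2 c1 c2 :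
  C2norm2 (comb y1 y2 c1 c2) <= (2 * Cnorm2 y1 + 2) * Cnorm2 c1 + (2 * Cnorm2 y2 + 2) * Cnorm2 c2.
Proof.
  unfold comb, C2norm2; simpl.
  pose proof (Cnorm2_add_le (Cmul c1 y1) (Cmul c2 y2)).
  pose proof (Cnorm2_add_le c1 c2); rewrite !Cnorm2_mul in *; lra.
Qed.

Lemma bounded_series_comb_iff y1 y2 (c1 c2 : nat -> Cx) : y1 <> y2 ->
  bounded_series (fun m => C2norm2 (comb y1 y2 (c1 m) (c2 m))) <->
  bounded_series (fun m => Cnorm2 (c1 m)) /\ bounded_series (fun m => Cnorm2 (c2 m)).
Proof.
  intro Hy; pose proof (Cnorm2_ge0 y1); pose proof (Cnorm2_ge0 y2).
  assert (Hpos : forall u v, u <> v -> 0 <= (2 + 2 * Cnorm2 v) / Cnorm2 (Csub u v)).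
  { intros u v Huv; pose proof (Cnorm2_ge0 v); apply Rle_mult_inv_pos; [lra |].
    apply Cnorm2_gt0, Csub_neq0, Huv. }
  split.
  - intro Hb; split.
    + apply bounded_series_le with (2 := bounded_series_scal _ _ (Hpos _ _ Hy) Hb).
      intro m; apply Cnorm2_comb_coef_le, Hy.
    + assert (Hy' : y2 <> y1) by auto.
      apply bounded_series_le with (2 := bounded_series_scal _ _ (Hpos _ _ Hy') Hb).
      intro m; rewrite <- comb_swap; apply Cnorm2_comb_coef_le, Hy'.
  - intros [Hb1 Hb2]; apply bounded_series_le with (1 := fun m => C2norm2_comb_le _ _ _ _).
    apply bounded_series_add; apply bounded_series_scal; auto; lra.
Qed.

Lemma bounded_series_mode_iff c z :
  bounded_series (fun m => Cnorm2 (Cmul c (Cpow z m))) <-> c = C0 \/ Cnorm2 z < 1.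
Proof.
  rewrite (bounded_series_ext _ (fun m => Cnorm2 c * Cnorm2 z ^ m))
    by (intro; rewrite Cnorm2_mul, Cnorm2_pow; reflexivity).
  rewrite bounded_series_geometric, Cnorm2_eq0_iff by apply Cnorm2_ge0; reflexivity.
Qed.

(** * Three-term recurrences *)

Definition casoratian (psi1 psi2 : Z -> Cx) (x : Z) : Cx :=
  Csub (Cmul (psi1 x) (psi2 (x + 1)%Z)) (Cmul (psi1 (x + 1)%Z) (psi2 x)).

Section ThreeTermRecurrence.

Variables f g h : Z -> Cx.

Definition rec_residual (psi : Z -> Cx) (x : Z) : Cx :=
  Cadd (Csub (Cmul (f x) (psi (x + 1)%Z)) (Cmul (g x) (psi (x - 1)%Z))) (Cmul (h x) (psi x)).

Definition solves_rec (psi : Z -> Cx) : Prop := forall x, rec_residual psi x = C0.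

Lemma solves_rec_comb psi1 psi2 c1 c2 : solves_rec psi1 -> solves_rec psi2 ->
  solves_rec (fun x => Cadd (Cmul c1 (psi1 x)) (Cmul c2 (psi2 x))).
Proof.
  intros H1 H2 x.
  transitivity (Cadd (Cmul c1 (rec_residual psi1 x)) (Cmul c2 (rec_residual psi2 x)));
    [unfold rec_residual; ring | rewrite H1, H2; ring].
Qed.

Lemma casoratian_step psi1 psi2 x : solves_rec psi1 -> solves_rec psi2 ->
  Cmul (f x) (casoratian psi1 psi2 x) = Copp (Cmul (g x) (casoratian psi1 psi2 (x - 1)%Z)).
Proof.
  intros H1 H2.
  transitivity (Csub (Copp (Cmul (g x) (casoratian psi1 psi2 (x - 1)%Z)))
                     (Csub (Cmul (rec_residual psi1 x) (psi2 x))
                           (Cmul (psi1 x) (rec_residual psi2 x)))).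
  - unfold rec_residual, casoratian; replace (x - 1 + 1)%Z with x by lia; ring.
  - rewrite H1, H2; ring.
Qed.

Hypotheses (Hf : forall x, f x <> C0) (Hg : forall x, g x <> C0).

Lemma solves_rec_eq0 psi : solves_rec psi -> psi 0%Z = C0 -> psi 1%Z = C0 ->
  forall x, psi x = C0.
Proof.
  intros Hrec H0 H1.
  assert (Hfwd : forall n, psi (Z.of_nat n) = C0 /\ psi (Z.of_nat n + 1)%Z = C0).
  { induction n as [| n [IH0 IH1]]; [split; assumption |].
    replace (Z.of_nat (S n)) with (Z.of_nat n + 1)%Z by lia; split; [exact IH1 |].
    specialize (Hrec (Z.of_nat n + 1)%Z); unfold rec_residual in Hrec.
    replace (Z.of_nat n + 1 - 1)%Z with (Z.of_nat n) in Hrec by lia.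
    rewrite IH0, IH1 in Hrec; apply (Cmul_eq0_r (f (Z.of_nat n + 1)%Z)); [apply Hf |].
    rewrite <- Hrec; ring. }
  assert (Hbwd : forall n, psi (- Z.of_nat n)%Z = C0 /\ psi (- Z.of_nat n + 1)%Z = C0).
  { induction n as [| n [IH0 IH1]]; [split; assumption |].
    replace (- Z.of_nat (S n) + 1)%Z with (- Z.of_nat n)%Z by lia; split; [| exact IH0].
    specialize (Hrec (- Z.of_nat n)%Z); unfold rec_residual in Hrec.
    replace (- Z.of_nat n - 1)%Z with (- Z.of_nat (S n))%Z in Hrec by lia.
    rewrite IH0, IH1 in Hrec; apply (Cmul_eq0_r (g (- Z.of_nat n)%Z)); [apply Hg |].
    apply Copp_eq0; rewrite <- Hrec; ring. }
  intro x; destruct (Z_le_gt_dec x 0).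
  - replace x with (- Z.of_nat (Z.to_nat (- x)))%Z by lia; apply Hbwd.
  - replace x with (Z.of_nat (Z.to_nat x)) by lia; apply Hfwd.
Qed.

Lemma solves_rec_dependent psi1 psi2 : solves_rec psi1 -> solves_rec psi2 ->
  casoratian psi1 psi2 0%Z = C0 ->
  exists c1 c2, (c1 <> C0 \/ c2 <> C0) /\
    forall x, Cadd (Cmul c1 (psi1 x)) (Cmul c2 (psi2 x)) = C0.
Proof.
  intros H1 H2 HW.
  destruct (det2_eq0_kernel (psi1 0%Z) (psi2 0%Z) (psi1 1%Z) (psi2 1%Z) HW)
    as (c1 & c2 & Hnz & E0 & E1).
  exists c1, c2; split; [exact Hnz |].
  apply (solves_rec_eq0 _ (solves_rec_comb _ _ c1 c2 H1 H2)); assumption.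
Qed.

End ThreeTermRecurrence.

Lemma Cnorm2_casoratian_le psi1 psi2 M1 M2 x :
  (forall y, Cnorm2 (psi1 y) <= M1) -> (forall y, Cnorm2 (psi2 y) <= M2) ->
  Cnorm2 (casoratian psi1 psi2 x) <= 2 * M2 * Cnorm2 (psi1 x) + 2 * M1 * Cnorm2 (psi2 x).
Proof.
  intros H1 H2; unfold casoratian; eapply Rle_trans; [apply Cnorm2_sub_le |].
  rewrite !Cnorm2_mul; specialize (H1 (x + 1)%Z); specialize (H2 (x + 1)%Z).
  pose proof (Cnorm2_ge0 (psi1 x)); pose proof (Cnorm2_ge0 (psi2 x)).
  pose proof (Cnorm2_ge0 (psi1 (x + 1)%Z)); pose proof (Cnorm2_ge0 (psi2 (x + 1)%Z)); nra.
Qed.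

Lemma casoratian_summable psi1 psi2 : l2Z psi1 -> l2Z psi2 ->
  summable_Z (fun x => Cnorm2 (casoratian psi1 psi2 x)).
Proof.
  intros H1 H2.
  destruct (summable_Z_bounded _ (fun x => Cnorm2_ge0 (psi1 x)) H1) as [M1 HM1].
  destruct (summable_Z_bounded _ (fun x => Cnorm2_ge0 (psi2 x)) H2) as [M2 HM2].
  assert (0 <= M1) by (apply Rle_trans with (2 := HM1 0%Z), Cnorm2_ge0).
  assert (0 <= M2) by (apply Rle_trans with (2 := HM2 0%Z), Cnorm2_ge0).
  apply summable_Z_le with (1 := fun x => Cnorm2_casoratian_le psi1 psi2 M1 M2 x HM1 HM2).
  apply summable_Z_add; apply summable_Z_scal; auto; lra.
Qed.

(** * The split-step walk *)

Section SplitStep.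

Variables (p : R) (q : Cx).
Hypotheses (Hq : q <> C0) (Hpq : p ^ 2 + Cnorm2 q = 1).

Lemma one_sgn_p_gt0 sg : 0 < 1 + sgn sg * p.
Proof. pose proof (proj2 (Cnorm2_gt0 q) Hq); destruct sg; simpl; nra. Qed.

Lemma Cnorm2_q_sgn sg : Cnorm2 q = (1 - sgn sg * p) * (1 + sgn sg * p).
Proof. pose proof (sgn_sq sg); nra. Qed.

Lemma Cnorm2_alpha b sg x :
  Cnorm2 (alpha p q b sg x) = (1 + sgn sg * p) * (1 + sgn sg * p) * Cnorm2 (b x).
Proof. unfold alpha; rewrite Cnorm2_mul, Cnorm2_scale, Cnorm2_expiArg by exact Hq; ring. Qed.

Lemma alpha_neq0 b sg x : b x <> C0 -> alpha p q b sg x <> C0.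
Proof.
  rewrite <- !Cnorm2_gt0, Cnorm2_alpha; intro Hb.
  pose proof (one_sgn_p_gt0 sg); apply Rmult_lt_0_compat; nra.
Qed.

Lemma zz_mul_alpha b sg j x a : b x <> C0 ->
  Cmul (zz p q sg j a (b x)) (alpha p q b sg x) = RtoC (Cabs q * ((-1) ^ j + sgn sg * a)).
Proof.
  intro Hb; pose proof (one_sgn_p_gt0 sg); unfold zz, alpha; rewrite !Cscale_RtoC.
  transitivity (Cmul (Cmul (RtoC (/ (1 + sgn sg * p))) (RtoC (1 + sgn sg * p)))
                     (Cmul (Cmul (Cconj q) (expiArg q)) (RtoC ((-1) ^ j + sgn sg * a))));
    [field; exact Hb |].
  rewrite Cconj_mul_expiArg, <- !RtoC_mul by exact Hq; f_equal; field; lra.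
Qed.

(* Both sides are real multiples of [conj q / b x]; the multipliers agree because
   [|q|^2 = (1 - sgn sg * p) (1 + sgn sg * p)] and [|b x|^2 = 1 - a^2]. *)
Lemma Cconj_alpha_negb b sg j x a : a ^ 2 + Cnorm2 (b x) = 1 -> b x <> C0 ->
  Cconj (alpha p q b (negb sg) x)
  = Cmul (RtoC (Cabs q * ((-1) ^ j - sgn sg * a))) (zz p q sg j a (b x)).
Proof.
  intros Hab Hb; pose proof (one_sgn_p_gt0 sg); pose proof (Cabs_gt0 q Hq).
  unfold alpha, zz, expiArg.
  rewrite Cconj_mul, !Cconj_Cscale, sgn_negb, (Cconj_eq_div (b x) Hb), !Cscale_RtoC.
  replace (Cnorm2 (b x)) with (1 - a ^ 2) by lra.
  transitivity (Cmul (RtoC ((1 + - sgn sg * p) * / Cabs q * (1 - a ^ 2))) (Cdiv (Cconj q) (b x)));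
    [rewrite !RtoC_mul; field; exact Hb |].
  transitivity (Cmul (RtoC (Cabs q * ((-1) ^ j - sgn sg * a) * / (1 + sgn sg * p)
                           * ((-1) ^ j + sgn sg * a)))
                     (Cdiv (Cconj q) (b x)));
    [| rewrite !RtoC_mul; field; exact Hb].
  do 2 f_equal; apply (Rmult_eq_reg_l (Cabs q * (1 + sgn sg * p))); [| nra].
  transitivity ((1 - sgn sg * p) * (1 + sgn sg * p) * (1 - a ^ 2)); [field; lra |].
  rewrite <- (Cnorm2_q_sgn sg), <- Cabs_sq.
  pose proof (pow_m1_sq j); pose proof (sgn_sq sg); field_simplify; [nra | lra].
Qed.

(* In vector form: [A(x) (zX, 1) = zX (zY, 1)], where [zX], [zY] use the coins at [x], [x + 1]. *)
Lemma Amat_eigen a1 a2 b sg j x aX bX aY bY :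
  aX ^ 2 + Cnorm2 bX = 1 -> bX <> C0 -> bY <> C0 ->
  a1 x = aX -> b x = bX -> a2 (x + 1)%Z = - aY -> b (x + 1)%Z = bY ->
  Cadd (Cmul (m11 (Amat p q a1 a2 b sg x)) (zz p q sg j aX bX)) (m12 (Amat p q a1 a2 b sg x))
  = Cmul (zz p q sg j aX bX) (zz p q sg j aY bY).
Proof.
  intros HaX HbX HbY Ha1 Hbx Ha2 Hbx1; subst bX bY.
  assert (Hden : alpha p q b sg (x + 1) <> C0) by exact (alpha_neq0 b sg (x + 1) HbY).
  assert (HzY : zz p q sg j aY (b (x + 1)%Z)
                = Cdiv (RtoC (Cabs q * ((-1) ^ j + sgn sg * aY))) (alpha p q b sg (x + 1))).
  { rewrite <- (zz_mul_alpha b sg j (x + 1) aY HbY); field; exact Hden. }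
  unfold Amat; cbn [m11 m12].
  rewrite (Cconj_alpha_negb b sg j x aX HaX HbX), HzY; unfold beta; rewrite Ha1, Ha2.
  transitivity (Cmul (zz p q sg j aX (b x))
    (Cdiv (Cadd (RtoC (- sgn sg * (Cabs q * (- aY - aX))))
                (RtoC (Cabs q * ((-1) ^ j - sgn sg * aX))))
          (alpha p q b sg (x + 1)))); [field; exact Hden |].
  rewrite <- RtoC_add; do 3 f_equal; ring.
Qed.

Lemma Amat_comb a1 a2 b sg x aX bX aY bY c1 c2 :
  aX ^ 2 + Cnorm2 bX = 1 -> bX <> C0 -> bY <> C0 ->
  a1 x = aX -> b x = bX -> a2 (x + 1)%Z = - aY -> b (x + 1)%Z = bY ->
  M2app (Amat p q a1 a2 b sg x) (comb (zz p q sg 1 aX bX) (zz p q sg 2 aX bX) c1 c2)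
  = comb (zz p q sg 1 aY bY) (zz p q sg 2 aY bY)
         (Cmul c1 (zz p q sg 1 aX bX)) (Cmul c2 (zz p q sg 2 aX bX)).
Proof.
  intros; pose proof (Amat_eigen a1 a2 b sg 1 x aX bX aY bY) as E1.
  pose proof (Amat_eigen a1 a2 b sg 2 x aX bX aY bY) as E2.
  unfold M2app, comb; cbn [fst snd]; set (A := Amat p q a1 a2 b sg x) in *.
  change (m21 A) with C1; change (m22 A) with C0; f_equal.
  - transitivity (Cadd (Cmul c1 (Cadd (Cmul (m11 A) (zz p q sg 1 aX bX)) (m12 A)))
                       (Cmul c2 (Cadd (Cmul (m11 A) (zz p q sg 2 aX bX)) (m12 A)))); [ring |].
    rewrite E1, E2 by assumption; ring.
  - ring.
Qed.

Lemma Amat_m12_neq0 a1 a2 b sg x : b x <> C0 -> b (x + 1)%Z <> C0 ->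
  m12 (Amat p q a1 a2 b sg x) <> C0.
Proof.
  intros Hb Hb1; unfold Amat; cbn [m12]; apply Cnorm2_gt0.
  pose proof (proj2 (Cnorm2_gt0 _) (alpha_neq0 b (negb sg) x Hb)).
  pose proof (proj2 (Cnorm2_gt0 _) (alpha_neq0 b sg (x + 1) Hb1)).
  rewrite Cnorm2_div, Cnorm2_conj by exact (alpha_neq0 b sg (x + 1) Hb1).
  apply Rdiv_lt_0_compat; assumption.
Qed.

Lemma zz_norm2 sg j a bs : a ^ 2 + Cnorm2 bs = 1 -> bs <> C0 ->
  Cnorm2 (zz p q sg j a bs)
  = (1 - sgn sg * p) * ((-1) ^ j + sgn sg * a) ^ 2 / ((1 + sgn sg * p) * (1 - a ^ 2)).
Proof.
  intros Hab Hb; pose proof (one_sgn_p_gt0 sg); pose proof (proj2 (Cnorm2_gt0 _) Hb).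
  unfold zz; rewrite Cnorm2_mul, Cnorm2_scale, Cnorm2_conj, Cnorm2_div, Cnorm2_RtoC by exact Hb.
  rewrite (Cnorm2_q_sgn sg); replace (Cnorm2 bs) with (1 - a ^ 2) by lra.
  field; lra.
Qed.

Lemma zz_neq0 sg j a bs : a ^ 2 + Cnorm2 bs = 1 -> bs <> C0 -> zz p q sg j a bs <> C0.
Proof.
  intros Hab Hb E; pose proof (Cabs_gt0 q Hq); pose proof (proj2 (Cnorm2_gt0 _) Hb).
  assert (Hs : (-1) ^ j + sgn sg * a <> 0)
    by (destruct (pow_m1_cases j) as [-> | ->], sg; simpl; nra).
  pose proof (zz_mul_alpha (fun _ => bs) sg j 0 a Hb) as Hprod; cbv beta in Hprod.
  rewrite E in Hprod; apply (f_equal Re) in Hprod; simpl in Hprod.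
  apply (Rmult_integral_contrapositive_currified (Cabs q) _ (Rgt_not_eq _ _ H) Hs); lra.
Qed.

Lemma zz_1_neq_2 sg a bs : bs <> C0 -> zz p q sg 1 a bs <> zz p q sg 2 a bs.
Proof.
  intros Hb E; pose proof (Cabs_gt0 q Hq).
  pose proof (zz_mul_alpha (fun _ => bs) sg 1 0 a Hb) as Hprod1.
  pose proof (zz_mul_alpha (fun _ => bs) sg 2 0 a Hb) as Hprod2.
  cbv beta in Hprod1, Hprod2; rewrite E, Hprod2 in Hprod1.
  apply (f_equal Re) in Hprod1; simpl in Hprod1; nra.
Qed.

Lemma zz_norm2_sub1 sg j a bs : a ^ 2 + Cnorm2 bs = 1 -> bs <> C0 ->
  Cnorm2 (zz p q sg j a bs) - 1
  = 2 * (1 + sgn sg * (-1) ^ j * a) / ((1 + sgn sg * p) * (1 - a ^ 2))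
    * (sgn sg * (-1) ^ j * (a - (-1) ^ j * p)).
Proof.
  intros Hab Hb; rewrite zz_norm2 by assumption.
  pose proof (one_sgn_p_gt0 sg); pose proof (proj2 (Cnorm2_gt0 _) Hb).
  destruct (pow_m1_cases j) as [-> | ->], sg; simpl in *; field; lra.
Qed.

Lemma zz_norm2_cmp1 sg j a bs : a ^ 2 + Cnorm2 bs = 1 -> bs <> C0 ->
  (1 < Cnorm2 (zz p q sg j a bs) <-> 0 < sgn sg * (-1) ^ j * (a - (-1) ^ j * p)) /\
  (Cnorm2 (zz p q sg j a bs) < 1 <-> sgn sg * (-1) ^ j * (a - (-1) ^ j * p) < 0).
Proof.
  intros Hab Hb; pose proof (zz_norm2_sub1 sg j a bs Hab Hb) as E.
  pose proof (one_sgn_p_gt0 sg); pose proof (proj2 (Cnorm2_gt0 _) Hb).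
  assert (Hc : 0 < 2 * (1 + sgn sg * (-1) ^ j * a) / ((1 + sgn sg * p) * (1 - a ^ 2))).
  { apply Rdiv_lt_0_compat; [| apply Rmult_lt_0_compat; lra].
    destruct (pow_m1_cases j) as [-> | ->], sg; simpl; nra. }
  split; split; intro; nra.
Qed.

Lemma zz_decay_iff sg j aL bL aR bR :
  aL ^ 2 + Cnorm2 bL = 1 -> bL <> C0 -> aR ^ 2 + Cnorm2 bR = 1 -> bR <> C0 ->
  (/ Cabs (zz p q sg j aL bL) < 1 /\ Cabs (zz p q sg j aR bR) < 1) <->
  (0 < sgn sg * (-1) ^ j * (aL - (-1) ^ j * p) /\ sgn sg * (-1) ^ j * (aR - (-1) ^ j * p) < 0).
Proof.
  intros HaL HbL HaR HbR; unfold Cabs.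
  rewrite inv_lt1_iff, sqrt_gt1_iff, sqrt_lt1_iff
    by (apply Cnorm2_ge0 || apply sqrt_lt_R0, Cnorm2_gt0, zz_neq0; assumption).
  rewrite (proj1 (zz_norm2_cmp1 sg j aL bL HaL HbL)), (proj2 (zz_norm2_cmp1 sg j aR bR HaR HbR)).
  reflexivity.
Qed.

Lemma zz_decay_cases aL bL aR bR :
  aL ^ 2 + Cnorm2 bL = 1 -> bL <> C0 -> aR ^ 2 + Cnorm2 bR = 1 -> bR <> C0 ->
  ((/ Cabs (zz p q true 1 aL bL) < 1 /\ Cabs (zz p q true 1 aR bR) < 1)
     <-> (aL < - p /\ - p < aR))
  /\
  ((/ Cabs (zz p q true 2 aL bL) < 1 /\ Cabs (zz p q true 2 aR bR) < 1)
     <-> (aR < p /\ p < aL))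
  /\
  ((/ Cabs (zz p q false 1 aL bL) < 1 /\ Cabs (zz p q false 1 aR bR) < 1)
     <-> (aR < - p /\ - p < aL))
  /\
  ((/ Cabs (zz p q false 2 aL bL) < 1 /\ Cabs (zz p q false 2 aR bR) < 1)
     <-> (aL < p /\ p < aR)).
Proof.
  intros; rewrite !zz_decay_iff by assumption; simpl.
  split; [| split; [| split]]; split; intros [? ?]; split; lra.
Qed.

Lemma m2iQ_solves_rec a1 a2 b sg psi :
  (forall x, m2iQ p q a1 a2 b sg psi x = C0) ->
  solves_rec (fun x => alpha p q b sg (x + 1)) (fun x => Cconj (alpha p q b (negb sg) x))
             (fun x => RtoC (sgn sg * beta q a1 a2 x)) psi.
Proof.
  intros H x; rewrite <- (H x); unfold rec_residual, m2iQ, alpha, beta.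
  rewrite Cconj_mul, Cconj_Cscale, sgn_negb, !Cscale_RtoC.
  replace (1 + - sgn sg * p) with (1 - sgn sg * p) by ring.
  replace (sgn sg * (Cabs q * (a2 (x + 1)%Z - a1 x))) with (sgn sg * Cabs q * (a2 (x + 1)%Z - a1 x))
    by ring.
  ring.
Qed.

Lemma Qeps_eq0 a1 a2 b sg psi x :
  Qeps p q a1 a2 b sg psi x = C0 -> m2iQ p q a1 a2 b sg psi x = C0.
Proof.
  apply Cmul_eq0_r; intro E; apply (f_equal Im) in E; simpl in E; lra.
Qed.

(* [|b (x + 1)|^2 |W x|^2] is a geometric progression in [x]. *)
Lemma casoratian_l2_eq0 a1 a2 b sg psi1 psi2 :
  (forall x, b x <> C0) -> (forall x, Cnorm2 (b x) <= 1) ->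
  (forall x, m2iQ p q a1 a2 b sg psi1 x = C0) -> (forall x, m2iQ p q a1 a2 b sg psi2 x = C0) ->
  l2Z psi1 -> l2Z psi2 -> casoratian psi1 psi2 0%Z = C0.
Proof.
  intros Hb Hb1 K1 K2 L1 L2.
  pose proof (one_sgn_p_gt0 sg) as Hu; pose proof (one_sgn_p_gt0 (negb sg)) as Hv.
  rewrite sgn_negb in Hv.
  set (D := fun x => Cnorm2 (b (x + 1)%Z) * Cnorm2 (casoratian psi1 psi2 x)).
  assert (HD0 : forall x, 0 <= D x)
    by (intro; apply Rmult_le_pos; apply Cnorm2_ge0).
  assert (Hstep : forall x, D x = ((1 - sgn sg * p) / (1 + sgn sg * p)) ^ 2 * D (x - 1)%Z).
  { intro x; pose proof (casoratian_step _ _ _ psi1 psi2 x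
      (m2iQ_solves_rec _ _ _ _ _ K1) (m2iQ_solves_rec _ _ _ _ _ K2)) as E.
    apply (f_equal Cnorm2) in E.
    rewrite Cnorm2_opp, !Cnorm2_mul, Cnorm2_conj, !Cnorm2_alpha, sgn_negb in E.
    replace (1 + - sgn sg * p) with (1 - sgn sg * p) in E by ring.
    unfold D; replace (x - 1 + 1)%Z with x by lia.
    apply (Rmult_eq_reg_l ((1 + sgn sg * p) ^ 2)); [| nra].
    transitivity ((1 - sgn sg * p) * (1 - sgn sg * p) * Cnorm2 (b x)
                  * Cnorm2 (casoratian psi1 psi2 (x - 1)%Z));
      [rewrite <- E | field]; lra. }
  assert (HDsum : summable_Z D).
  { apply summable_Z_le with (2 := casoratian_summable psi1 psi2 L1 L2).
    intro x; unfold D; cbv beta.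
    pose proof (Cnorm2_ge0 (casoratian psi1 psi2 x)); pose proof (Hb1 (x + 1)%Z); nra. }
  assert (Hrho : 0 < ((1 - sgn sg * p) / (1 + sgn sg * p)) ^ 2)
    by (apply pow_lt, Rdiv_lt_0_compat; lra).
  pose proof (summable_Z_geometric_eq0 D _ Hrho HD0 Hstep HDsum) as HDz.
  unfold D in HDz; apply Rmult_integral in HDz as [E | E].
  - exfalso; apply (Hb 1%Z), Cnorm2_eq0_iff, E.
  - apply Cnorm2_eq0_iff, E.
Qed.

Lemma Qeps_dim_ker_le1 a1 a2 b sg :
  (forall x, b x <> C0) -> (forall x, Cnorm2 (b x) <= 1) ->
  dim_ker_le1 (Qeps p q a1 a2 b sg).
Proof.
  intros Hb Hb1 psi1 psi2 L1 L2 Q1 Q2.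
  assert (K1 : forall x, m2iQ p q a1 a2 b sg psi1 x = C0) by (intro; apply Qeps_eq0, Q1).
  assert (K2 : forall x, m2iQ p q a1 a2 b sg psi2 x = C0) by (intro; apply Qeps_eq0, Q2).
  apply solves_rec_dependent with (f := fun x => alpha p q b sg (x + 1))
    (g := fun x => Cconj (alpha p q b (negb sg) x)) (h := fun x => RtoC (sgn sg * beta q a1 a2 x)).
  - intro x; apply alpha_neq0, Hb.
  - intro x; apply Cconj_neq0, alpha_neq0, Hb.
  - apply m2iQ_solves_rec, K1.
  - apply m2iQ_solves_rec, K2.
  - apply (casoratian_l2_eq0 a1 a2 b sg); assumption.
Qed.

Section TwoPhase.

Variables (a1 a2 : Z -> R) (b : Z -> Cx) (aL aR : R) (bL bR : Cx) (sg : bool).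
Hypotheses (HaL : aL ^ 2 + Cnorm2 bL = 1) (HbL : bL <> C0)
           (HaR : aR ^ 2 + Cnorm2 bR = 1) (HbR : bR <> C0).
Hypothesis HL : forall x, (x <= 0)%Z -> a1 x = aL /\ a2 x = - aL /\ b x = bL.
Hypothesis HR : forall x, (1 <= x)%Z -> a1 x = aR /\ a2 x = - aR /\ b x = bR.
Variable Phi : Z -> C2.
Hypothesis HPhi : forall x, Phi (x + 1)%Z = M2app (Amat p q a1 a2 b sg x) (Phi x).

Local Notation zL j := (zz p q sg j aL bL).
Local Notation zR j := (zz p q sg j aR bR).
Local Notation k := (M2app (M2inv (Pmat p q sg aL bL)) (Phi 0%Z)).

Lemma Phi0_comb : Phi 0%Z = comb (zL 1) (zL 2) (fst k) (snd k).
Proof.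
  pose proof (Csub_neq0 _ _ (zz_1_neq_2 sg aL bL HbL)) as Hdet.
  destruct (Phi 0%Z) as [u v]; unfold M2inv, Pmat, M2det, M2app, comb; cbn.
  f_equal; field; intro E; apply Hdet; rewrite <- E; ring.
Qed.

Lemma Phi_left m : Phi (- Z.of_nat m)%Z =
  comb (zL 1) (zL 2) (Cmul (fst k) (Cpow (Cinv (zL 1)) m)) (Cmul (snd k) (Cpow (Cinv (zL 2)) m)).
Proof.
  pose proof (zz_neq0 sg 1 aL bL HaL HbL); pose proof (zz_neq0 sg 2 aL bL HaL HbL).
  induction m as [| m IH].
  - change (- Z.of_nat 0)%Z with 0%Z; rewrite Phi0_comb at 1.
    unfold comb; cbn [Cpow]; f_equal; ring.
  - set (x := (- Z.of_nat (S m))%Z).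
    destruct (HL x) as (Ha1 & _ & Hb); [lia |].
    destruct (HL (x + 1)) as (_ & Ha2 & Hb1); [lia |].
    apply (M2app_inj_companion (Amat p q a1 a2 b sg x)); [reflexivity | reflexivity | |].
    { apply Amat_m12_neq0; [rewrite Hb | rewrite Hb1]; exact HbL. }
    rewrite <- HPhi; replace (x + 1)%Z with (- Z.of_nat m)%Z by lia.
    rewrite IH, (Amat_comb a1 a2 b sg x aL bL aL bL) by assumption.
    unfold comb; cbn [Cpow]; f_equal; field; auto.
Qed.

Lemma Phi_right m : Phi (Z.of_nat (S m)) =
  comb (zR 1) (zR 2) (Cmul (Cmul (fst k) (zL 1)) (Cpow (zR 1) m))
                     (Cmul (Cmul (snd k) (zL 2)) (Cpow (zR 2) m)).
Proof.
  induction m as [| m IH].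
  - destruct (HL 0%Z) as (Ha1 & _ & Hb); [lia |].
    destruct (HR 1%Z) as (_ & Ha2 & Hb1); [lia |].
    change (Z.of_nat 1) with (0 + 1)%Z; rewrite HPhi, Phi0_comb at 1.
    rewrite (Amat_comb a1 a2 b sg 0 aL bL aR bR) by assumption.
    unfold comb; cbn [Cpow]; f_equal; ring.
  - set (x := Z.of_nat (S m)).
    destruct (HR x) as (Ha1 & _ & Hb); [lia |].
    destruct (HR (x + 1)) as (_ & Ha2 & Hb1); [lia |].
    replace (Z.of_nat (S (S m))) with (x + 1)%Z by lia.
    rewrite HPhi; unfold x; rewrite IH; fold x.
    rewrite (Amat_comb a1 a2 b sg x aR bR aR bR) by assumption.
    unfold comb; cbn [Cpow]; f_equal; ring.
Qed.

Lemma summable_Phi_iff :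
  summable_Z (fun x => C2norm2 (Phi x)) <->
  forall j : nat, (j = 1 \/ j = 2)%nat ->
    summable_N (fun x => Cnorm2 (C2comp j k) *
      ((/ Cnorm2 (zL j)) ^ x + (Cnorm2 (zR j)) ^ x)).
Proof.
  pose proof (zz_neq0 sg 1 aL bL HaL HbL); pose proof (zz_neq0 sg 2 aL bL HaL HbL).
  assert (Hpos : forall z, z <> C0 -> 0 < Cnorm2 z) by (intro; apply Cnorm2_gt0).
  rewrite summable_Z_halves
    by (intro; unfold C2norm2; pose proof (Cnorm2_ge0 (fst (Phi x)));
        pose proof (Cnorm2_ge0 (snd (Phi x))); lra).
  rewrite (bounded_series_ext _ _ (fun m => f_equal C2norm2 (Phi_left m))),
          (bounded_series_ext _ _ (fun m => f_equal C2norm2 (Phi_right m))).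
  rewrite !bounded_series_comb_iff by (apply zz_1_neq_2; assumption).
  rewrite !bounded_series_mode_iff, !Cnorm2_inv, !Cmul_eq0_iff_l by assumption.
  rewrite forall_1_2; cbn [C2comp Nat.eqb].
  rewrite !summable_N_geometric_pair, !Cnorm2_eq0_iff
    by (apply Cnorm2_ge0 || apply Rinv_0_lt_compat, Hpos, zz_neq0 || apply Hpos, zz_neq0;
        assumption).
  tauto.
Qed.

End TwoPhase.
End SplitStep.

Theorem corollary4p13
  (p : R) (q : Cx) (a1 a2 : Z -> R) (b : Z -> Cx)
  (a1L a2L a1R a2R : R) (bL bR : Cx)
  (Hq : q <> C0) (Hpq : p ^ 2 + Cnorm2 q = 1)
  (Hunit1 : forall x, a1 x ^ 2 + Cnorm2 (b x) = 1)
  (Hunit2 : forall x, a2 x ^ 2 + Cnorm2 (b x) = 1)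
  (Hsum : forall x, Cmul (b x) (RtoC (a1 x + a2 x)) = C0)
  (HL : forall x, (x <= 0)%Z -> a1 x = a1L /\ a2 x = a2L /\ b x = bL)
  (HR : forall x, (1 <= x)%Z -> a1 x = a1R /\ a2 x = a2R /\ b x = bR)
  (HntL : ~ (a1L = 1 /\ a2L = 1 /\ bL = C0) /\ ~ (a1L = -1 /\ a2L = -1 /\ bL = C0))
  (HntR : ~ (a1R = 1 /\ a2R = 1 /\ bR = C0) /\ ~ (a1R = -1 /\ a2R = -1 /\ bR = C0))
  (* Type III *)
  (HbL : bL <> C0) (HbR : bR <> C0) :
  (* a(L) := a1L, a(R) := a1R *)
  (forall (sg : bool) (Phi : Z -> C2),
     (forall x, Phi (x + 1)%Z = M2app (Amat p q a1 a2 b sg x) (Phi x)) ->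
     let k := M2app (M2inv (Pmat p q sg a1L bL)) (Phi 0%Z) in
     (summable_Z (fun x => C2norm2 (Phi x)) <->
      forall j : nat, (j = 1 \/ j = 2)%nat ->
        summable_N (fun x => Cnorm2 (C2comp j k) *
          ((/ Cnorm2 (zz p q sg j a1L bL)) ^ x + (Cnorm2 (zz p q sg j a1R bR)) ^ x))))
  /\
  ((/ Cabs (zz p q true 1 a1L bL) < 1 /\ Cabs (zz p q true 1 a1R bR) < 1)
     <-> (a1L < - p /\ - p < a1R))
  /\
  ((/ Cabs (zz p q true 2 a1L bL) < 1 /\ Cabs (zz p q true 2 a1R bR) < 1)
     <-> (a1R < p /\ p < a1L))
  /\
  ((/ Cabs (zz p q false 1 a1L bL) < 1 /\ Cabs (zz p q false 1 a1R bR) < 1)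
     <-> (a1R < - p /\ - p < a1L))
  /\
  ((/ Cabs (zz p q false 2 a1L bL) < 1 /\ Cabs (zz p q false 2 a1R bR) < 1)
     <-> (a1L < p /\ p < a1R))
  /\
  (forall sg : bool, dim_ker_le1 (Qeps p q a1 a2 b sg)).
Proof.
  assert (Hb : forall x, b x <> C0).
  { intro x; destruct (Z_le_gt_dec x 0) as [Hx | Hx];
      [rewrite (proj2 (proj2 (HL x Hx))) | rewrite (proj2 (proj2 (HR x ltac:(lia))))]; assumption. }
  assert (Ha2 : forall x, a2 x = - a1 x).
  { intro x; pose proof (f_equal Re (Cmul_eq0_r _ _ (Hb x) (Hsum x))) as E; simpl in E; lra. }
  assert (HL' : forall x, (x <= 0)%Z -> a1 x = a1L /\ a2 x = - a1L /\ b x = bL)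
    by (intros x Hx; rewrite Ha2; destruct (HL x Hx) as (-> & _ & ->); auto).
  assert (HR' : forall x, (1 <= x)%Z -> a1 x = a1R /\ a2 x = - a1R /\ b x = bR)
    by (intros x Hx; rewrite Ha2; destruct (HR x Hx) as (-> & _ & ->); auto).
  assert (HaL : a1L ^ 2 + Cnorm2 bL = 1)
    by (destruct (HL' 0%Z ltac:(lia)) as (<- & _ & <-); apply Hunit1).
  assert (HaR : a1R ^ 2 + Cnorm2 bR = 1)
    by (destruct (HR' 1%Z ltac:(lia)) as (<- & _ & <-); apply Hunit1).
  destruct (zz_decay_cases p q Hq Hpq a1L bL a1R bR HaL HbL HaR HbR) as (W1 & W2 & W3 & W4).
  refine (conj _ (conj W1 (conj W2 (conj W3 (conj W4 _))))).
  - intros sg Phi HPhi; eapply summable_Phi_iff; eassumption.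
  - intro sg; apply Qeps_dim_ker_le1; [assumption .. |].
    intro x; pose proof (Hunit1 x); pose proof (pow2_ge_0 (a1 x)); lra.
Qed.
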